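(* Let $G$ be a group acting on a set $X$. Let $A\subset G$ and $Y\subset X$ be nonempty with $Y$ finite, and suppose there exists $\alpha\in\,]0,1[$ such that $\mathrm{Sym}_{\alpha}(Y)\subset AA^{-1}$ and $|A^{-1}\cdot Y|\leq\frac{3-\alpha}{2}|Y|$. Then $AA^{-1}$ is a subgroup of $G$.
   Context: $AA^{-1}=\{ab^{-1}\mid a,b\in A\}$, $A^{-1}\cdot Y=\{a^{-1}\cdot y\mid a\in A,y\in Y\}$, and $\mathrm{Sym}_{\alpha}(Y)=\{g\in G\mid |g\cdot Y\cap Y|\geq\alpha|Y|\}$. *)

From Stdlib Require Import Reals List.
Import ListNotations.

Record Group := {
  gcar :> Type;
  gmul : gcar -> gcar -> gcar;
  ginv : gcar -> gcar;
  gone : gcar;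
  gmulA : forall x y z, gmul x (gmul y z) = gmul (gmul x y) z;
  gmul1l : forall x, gmul gone x = x;
  gmulVl : forall x, gmul (ginv x) x = gone
}.

Record Action (G : Group) (X : Type) := {
  act : G -> X -> X;
  act1 : forall x, act (gone G) x = x;
  actM : forall g h x, act (gmul G g h) x = act g (act h x)
}.
Arguments act {G X} _ _ _.

Definition has_card {T : Type} (S : T -> Prop) (n : nat) : Prop :=
  exists l : list T, NoDup l /\ (forall x, In x l <-> S x) /\ length l = n.

Definition AAinv (G : Group) (A : G -> Prop) : G -> Prop :=
  fun g => exists a b, A a /\ A b /\ g = gmul G a (ginv G b).

Definition invA_act (G : Group) (X : Type) (ac : Action G X)
  (A : G -> Prop) (Y : X -> Prop) : X -> Prop :=
  fun x => exists a y, A a /\ Y y /\ x = act ac (ginv G a) y.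

Definition transl_cap (G : Group) (X : Type) (ac : Action G X)
  (g : G) (Y : X -> Prop) : X -> Prop :=
  fun x => Y x /\ exists y, Y y /\ x = act ac g y.

Definition Sym (G : Group) (X : Type) (ac : Action G X)
  (alpha : R) (Y : X -> Prop) : G -> Prop :=
  fun g => exists k nY, has_card (transl_cap G X ac g Y) k /\ has_card Y nY /\
                        (INR k >= alpha * INR nY)%R.

Definition is_subgroup (G : Group) (S : G -> Prop) : Prop :=
  S (gone G) /\ (forall x y, S x -> S y -> S (gmul G x y)) /\
  (forall x, S x -> S (ginv G x)).

(* If a, b are in A, then a^-1 Y and b^-1 Y are two translates of Y inside
   A^-1 Y, which is small, so they overlap in at least 2|Y| - |A^-1 Y| points;
   applying a, the element a b^-1 moves at least that many points of Y into Y.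
   Since g(hY ∩ Y) and gY ∩ Y both lie in gY, and their intersection lies in
   ghY ∩ Y, we get |ghY ∩ Y| >= |gY ∩ Y| + |hY ∩ Y| - |Y|, so every product of two elements of A A^-1 moves at least
   3|Y| - 2|A^-1 Y| >= alpha |Y| points of Y into Y: it lies in Sym_alpha(Y),
   hence in A A^-1.  Closure under inverses is automatic. *)

From Stdlib Require Import Reals.
From Stdlib Require Import List FinFun ClassicalEpsilon Permutation Lia Lra.

Section Cardinality.
Variable T : Type.

Definition pbool (P : Prop) : bool :=
  if excluded_middle_informative P then true else false.

Lemma pboolP (P : Prop) : pbool P = true <-> P.
Proof.
  unfold pbool; destruct (excluded_middle_informative P); split; auto; discriminate.
Qed.

Definition count_in (l : list T) (P : T -> Prop) : nat :=
  length (filter (fun x => pbool (P x)) l).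

Lemma count_in_cons a l P :
  count_in (a :: l) P = ((if pbool (P a) then 1 else 0) + count_in l P)%nat.
Proof. unfold count_in; simpl; destruct (pbool (P a)); reflexivity. Qed.

Lemma count_in_union_inter l P Q :
  (count_in l P + count_in l Q =
   count_in l (fun x => P x /\ Q x) + count_in l (fun x => P x \/ Q x))%nat.
Proof.
  induction l as [|a l IH]; [reflexivity|].
  rewrite !count_in_cons; unfold pbool.
  repeat match goal with
         | |- context [excluded_middle_informative ?S] =>
             destruct (excluded_middle_informative S)
         end; try tauto; lia.
Qed.

Lemma has_card_ext (P Q : T -> Prop) n :
  (forall x, P x <-> Q x) -> has_card P n -> has_card Q n.
Proof.
  intros E [l [Hl [HP Hn]]]; exists l; split; [|split]; auto.
  intros x; rewrite HP; apply E.
Qed.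

Lemma has_card_unique (P : T -> Prop) p q : has_card P p -> has_card P q -> p = q.
Proof.
  intros [l1 [N1 [H1 <-]]] [l2 [N2 [H2 <-]]].
  apply Permutation_length, NoDup_Permutation; auto.
  intros x; rewrite H1, H2; tauto.
Qed.

Lemma has_card_subset_count (P S : T -> Prop) l :
  NoDup l -> (forall x, In x l <-> S x) -> (forall x, P x -> S x) ->
  has_card P (count_in l P).
Proof.
  intros Hl HS PS; exists (filter (fun x => pbool (P x)) l).
  split; [apply NoDup_filter; auto|split; [|reflexivity]].
  intros x; rewrite filter_In, pboolP, HS; intuition.
Qed.

Lemma has_card_subset (P S : T -> Prop) s :
  has_card S s -> (forall x, P x -> S x) -> exists p, has_card P p /\ (p <= s)%nat.
Proof.
  intros [l [Hl [HS <-]]] PS; exists (count_in l P); split.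
  - apply (has_card_subset_count P S); auto.
  - apply filter_length_le.
Qed.

Lemma card_subset_le (P S : T -> Prop) p s :
  (forall x, P x -> S x) -> has_card P p -> has_card S s -> (p <= s)%nat.
Proof.
  intros PS HP HS; destruct (has_card_subset P S s HS PS) as [p' [HP' Hle]].
  rewrite (has_card_unique P p p'); auto.
Qed.

Lemma card_inter_ge (P Q S : T -> Prop) p q s :
  (forall x, P x -> S x) -> (forall x, Q x -> S x) ->
  has_card P p -> has_card Q q -> has_card S s ->
  exists r, has_card (fun x => P x /\ Q x) r /\ (p + q <= s + r)%nat.
Proof.
  intros PS QS HP HQ [l [Hl [HS <-]]].
  pose proof (has_card_subset_count _ _ _ Hl HS PS) as HP'.
  pose proof (has_card_subset_count _ _ _ Hl HS QS) as HQ'.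
  rewrite (has_card_unique P p _ HP HP'), (has_card_unique Q q _ HQ HQ').
  exists (count_in l (fun x => P x /\ Q x)); split.
  - apply (has_card_subset_count _ S); intuition.
  - rewrite count_in_union_inter.
    pose proof (filter_length_le (fun x => pbool (P x \/ Q x)) l).
    unfold count_in at 2; lia.
Qed.

End Cardinality.

Lemma has_card_image {T U : Type} (f : T -> U) (P : T -> Prop) n :
  Injective f -> has_card P n -> has_card (fun x => exists y, P y /\ x = f y) n.
Proof.
  intros Hf [l [Hl [HP <-]]]; exists (map f l).
  split; [apply Injective_map_NoDup; auto|split; [|apply length_map]].
  intros x; rewrite in_map_iff; split.
  - intros [y [<- Hy]]; exists y; split; [apply HP|]; auto.
  - intros [y [Py ->]]; exists y; split; [|apply HP]; auto.
Qed.

Section GroupTheory.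
Variable G : Group.

Lemma gmulVr (x : G) : gmul G x (ginv G x) = gone G.
Proof.
  rewrite <- (gmul1l G (gmul G x (ginv G x))), <- (gmulVl G (ginv G x)) at 1.
  rewrite <- gmulA, (gmulA G (ginv G x)), gmulVl, gmul1l; apply gmulVl.
Qed.

Lemma gmul1r (x : G) : gmul G x (gone G) = x.
Proof. rewrite <- (gmulVl G x), gmulA, gmulVr, gmul1l; reflexivity. Qed.

Lemma ginv_mulV (a b : G) : ginv G (gmul G a (ginv G b)) = gmul G b (ginv G a).
Proof.
  set (x := gmul G a (ginv G b)).
  assert (Hx : gmul G x (gmul G b (ginv G a)) = gone G).
  { unfold x; rewrite <- gmulA, (gmulA G (ginv G b)), gmulVl, gmul1l; apply gmulVr. }
  rewrite <- (gmul1r (ginv G x)), <- Hx, gmulA, gmulVl, gmul1l; reflexivity.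
Qed.

Lemma AAinv_one (A : G -> Prop) : (exists a, A a) -> AAinv G A (gone G).
Proof. intros [a Ha]; exists a, a; rewrite gmulVr; auto. Qed.

Lemma AAinv_inv (A : G -> Prop) g : AAinv G A g -> AAinv G A (ginv G g).
Proof. intros [a [b [Ha [Hb ->]]]]; exists b, a; rewrite ginv_mulV; auto. Qed.

End GroupTheory.

Section Translates.
Variables (G : Group) (X : Type) (ac : Action G X).

Definition translate (g : G) (Y : X -> Prop) : X -> Prop :=
  fun x => exists y, Y y /\ x = act ac g y.

Lemma act_injective g : Injective (act ac g).
Proof.
  intros x y E.
  rewrite <- (act1 _ _ ac x), <- (act1 _ _ ac y), <- (gmulVl G g), !actM, E.
  reflexivity.
Qed.

Lemma has_card_translate g Y n : has_card Y n -> has_card (translate g Y) n.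
Proof. apply has_card_image, act_injective. Qed.

Lemma translate_mul g h Y x :
  translate g (translate h Y) x <-> translate (gmul G g h) Y x.
Proof.
  split.
  - intros [z [[y [Hy ->]] ->]]; exists y; rewrite actM; auto.
  - intros [y [Hy ->]]; exists (act ac h y); split; [exists y|rewrite actM]; auto.
Qed.

Lemma translate_one Y x : translate (gone G) Y x <-> Y x.
Proof.
  split; [intros [y [Hy ->]]; rewrite act1|intros Hx; exists x; rewrite act1]; auto.
Qed.

Lemma translate_inter g (P Q : X -> Prop) x :
  translate g (fun z => P z /\ Q z) x <-> translate g P x /\ translate g Q x.
Proof.
  split.
  - intros [y [[Py Qy] ->]]; split; exists y; auto.
  - intros [[y [Py ->]] [z [Qz E]]].
    apply act_injective in E; subst; exists z; auto.
Qed.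

Lemma transl_capE g Y x : transl_cap G X ac g Y x <-> Y x /\ translate g Y x.
Proof. reflexivity. Qed.

Variables (Y : X -> Prop) (n : nat).
Hypothesis HY : has_card Y n.

Lemma transl_cap_quotient_ge (S : X -> Prop) s a b :
  (forall x, translate (ginv G a) Y x -> S x) ->
  (forall x, translate (ginv G b) Y x -> S x) -> has_card S s ->
  exists k, has_card (transl_cap G X ac (gmul G a (ginv G b)) Y) k /\
            (2 * n <= s + k)%nat.
Proof.
  intros Sa Sb HS.
  destruct (card_inter_ge _ _ _ _ _ _ _ Sb Sa
              (has_card_translate _ _ _ HY) (has_card_translate _ _ _ HY) HS)
    as [r [Hr Hle]].
  exists r; split; [|lia].
  apply (has_card_ext _ (translate a (fun x => translate (ginv G b) Y x /\
                                               translate (ginv G a) Y x))).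
  - intros x; rewrite transl_capE, translate_inter, !translate_mul,
                      gmulVr, translate_one; tauto.
  - apply has_card_translate; exact Hr.
Qed.

Lemma transl_cap_mul_ge g h kg kh :
  has_card (transl_cap G X ac g Y) kg -> has_card (transl_cap G X ac h Y) kh ->
  exists k, has_card (transl_cap G X ac (gmul G g h) Y) k /\ (kg + kh <= n + k)%nat.
Proof.
  intros Hg Hh.
  destruct (has_card_subset _ (transl_cap G X ac (gmul G g h) Y) Y n HY)
    as [k [Hk _]]; [intros x []; auto|].
  exists k; split; auto.
  destruct (card_inter_ge _ (translate g (transl_cap G X ac h Y))
              (transl_cap G X ac g Y) (translate g Y) kh kg n)
    as [r [Hr Hle]].
  - intros x [y [[Hy _] ->]]; exists y; auto.
  - intros x [_ Hx]; exact Hx.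
  - apply has_card_translate; exact Hh.
  - exact Hg.
  - apply has_card_translate; exact HY.
  - enough (r <= k)%nat by lia.
    refine (card_subset_le _ _ _ _ _ _ Hr Hk).
    intros x [Hx [HYx _]]; split; auto.
    apply translate_mul, (translate_inter g (fun z => Y z) (translate h Y)), Hx.
Qed.

End Translates.

Lemma AAinv_mul_Sym (G : Group) (X : Type) (ac : Action G X)
  (A : G -> Prop) (Y : X -> Prop) (n m : nat) (alpha : R) g h :
  has_card Y n -> has_card (invA_act G X ac A Y) m ->
  (INR m <= (3 - alpha) / 2 * INR n)%R ->
  AAinv G A g -> AAinv G A h -> Sym G X ac alpha Y (gmul G g h).
Proof.
  intros HY Hm Hsmall [a [b [Ha [Hb ->]]]] [c [d [Hc [Hd ->]]]].
  assert (Hquot : forall a b, A a -> A b ->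
            exists k, has_card (transl_cap G X ac (gmul G a (ginv G b)) Y) k /\
                      (2 * n <= m + k)%nat).
  { intros a' b' Ha' Hb'.
    apply (transl_cap_quotient_ge G X ac Y n HY (invA_act G X ac A Y) m); auto.
    - intros x [y [Hy ->]]; exists a', y; auto.
    - intros x [y [Hy ->]]; exists b', y; auto. }
  destruct (Hquot a b Ha Hb) as [k1 [Hk1 Hle1]].
  destruct (Hquot c d Hc Hd) as [k2 [Hk2 Hle2]].
  destruct (transl_cap_mul_ge G X ac Y n HY _ _ _ _ Hk1 Hk2) as [k [Hk Hle]].
  exists k, n; repeat split; auto.
  assert (Hcount : (3 * n <= 2 * m + k)%nat) by lia.
  apply le_INR in Hcount; rewrite !plus_INR, !mult_INR in Hcount; simpl in Hcount.
  lra.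
Qed.

Theorem mainTheorem3 (G : Group) (X : Type) (ac : Action G X)
  (A : G -> Prop) (Y : X -> Prop) (nY : nat) (alpha : R) :
  (exists a, A a) ->
  has_card Y nY -> (0 < nY)%nat ->
  (0 < alpha < 1)%R ->
  (forall g, Sym G X ac alpha Y g -> AAinv G A g) ->
  (exists m, has_card (invA_act G X ac A Y) m /\
             (INR m <= (3 - alpha) / 2 * INR nY)%R) ->
  is_subgroup G (AAinv G A).
Proof.
  intros HA HY _ _ HSym [m [Hm Hsmall]].
  split; [|split].
  - apply AAinv_one, HA.
  - intros g h Hg Hh; apply HSym, (AAinv_mul_Sym G X ac A Y nY m); auto.
  - apply AAinv_inv.
Qed.
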